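(* Let $p$ be a prime and $n\ge1$. Let $D_n=\prod_{1\le h\le k\le n,\ \gcd(h,k)=1} k$ be the product of the denominators of all nonzero Farey fractions of order $n$ (each written in lowest terms). Then $$\mathrm{ord}_p(D_n)=\sum_{b=1}^{\lfloor\log_p n\rfloor}\ \sum_{a=1}^{\lfloor n/p^b\rfloor}\varphi(ap^b).$$
   Context: $\mathrm{ord}_p(m)$ is the exponent of the prime $p$ in the factorization of the positive integer $m$; $\varphi$ is Euler's totient function. *)

From mathcomp Require Import all_boot.

Definition farey_denom_prod (n : nat) : nat :=
  \prod_(1 <= k < n.+1) \prod_(1 <= h < k.+1 | coprime h k) k.

From mathcomp Require Import all_boot.

(* Since D_n = \prod_(k <= n) k ^ totient k, we have
   ord_p D_n = \sum_(k <= n) totient k * ord_p k.  Writing ord_p k as the number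
   of b >= 1 with p ^ b %| k and exchanging the two sums groups the k by the
   prime powers p ^ b dividing them, and the multiples of p ^ b up to n are the
   a * p ^ b with a <= n %/ p ^ b. *)

Lemma totient_count_coprime_nat k : totient k = \sum_(1 <= h < k.+1) coprime h k.
Proof.
case: k => [|k]; first by rewrite big_geq.
rewrite totient_count_coprime big_ltn // [RHS]big_nat_recr //= addnC.
have -> : coprime k.+1 0 = coprime k.+1 k.+1 by rewrite /coprime gcdn0 gcdnn.
by congr (_ + _); apply: eq_bigr => h _; rewrite coprime_sym.
Qed.

Lemma prod_coprime_const k x : \prod_(1 <= h < k.+1 | coprime h k) x = x ^ totient k.
Proof.
rewrite big_const_seq iter_muln_1 -sum1_count totient_count_coprime_nat big_mkcond.
by congr (_ ^ _); apply: eq_bigr => h _; case: coprime.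
Qed.

Lemma logn_prod p I r (P : pred I) (F : I -> nat) : (forall i, P i -> 0 < F i) ->
  logn p (\prod_(i <- r | P i) F i) = \sum_(i <- r | P i) logn p (F i).
Proof.
move=> F_gt0; apply: (@proj2 (0 < \prod_(i <- r | P i) F i)).
apply: (big_ind2 (fun m l => 0 < m /\ logn p m = l))
  => [|m1 l1 m2 l2 [m1_gt0 <-] [m2_gt0 <-]|i Pi].
- by rewrite logn1.
- by rewrite muln_gt0 m1_gt0 m2_gt0 lognM.
- by rewrite F_gt0.
Qed.

Lemma sum_nat_leq l m : l <= m -> \sum_(1 <= b < m.+1) (b <= l) = l.
Proof.
move=> le_lm; rewrite (big_cat_nat _ (n := l.+1)) //=.
have -> : \sum_(l.+1 <= b < m.+1) (b <= l) = 0.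
  by rewrite big_nat big1 // => b /andP[lt_lb _]; rewrite leqNgt lt_lb.
rewrite addn0 big_nat (eq_bigr (fun=> 1)) => [|b /andP[_ lt_bl1]].
  by rewrite -big_nat sum_nat_const_nat muln1 subn1.
by rewrite -ltnS lt_bl1.
Qed.

Lemma logn_count_dvd_bounded p k m : prime p -> 0 < k -> k < p ^ m.+1 ->
  logn p k = \sum_(1 <= b < m.+1) (p ^ b %| k).
Proof.
move=> p_pr k_gt0 lt_k_pm.
have le_log_m : logn p k <= m.
  rewrite -ltnS -(ltn_exp2l _ _ (prime_gt1 p_pr)) (leq_ltn_trans _ lt_k_pm) //.
  by rewrite dvdn_leq // pfactor_dvdnn.
rewrite -[LHS](sum_nat_leq _ _ le_log_m); apply: eq_bigr => b _.
by rewrite pfactor_dvdn.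
Qed.

Lemma big_nat_dvd R (idx : R) (op : Monoid.law idx) d n (F : nat -> R) : 0 < d ->
  \big[op/idx]_(1 <= k < n.+1 | d %| k) F k = \big[op/idx]_(1 <= a < (n %/ d).+1) F (a * d).
Proof.
move=> d_gt0; elim: n => [|n IHn]; first by rewrite div0n !big_geq.
rewrite big_mkcond big_nat_recr //= -big_mkcond IHn divnS //.
have [dvd_d_n1|_] := boolP (d %| n.+1); last by rewrite Monoid.mulm1.
rewrite add1n [RHS]big_nat_recr //=; congr (op _ (F _)).
have -> : (n %/ d).+1 = n.+1 %/ d by rewrite divnS // dvd_d_n1.
by rewrite divnK.
Qed.

Lemma farey_denom_prodE n :
  farey_denom_prod n = \prod_(1 <= k < n.+1) k ^ totient k.
Proof. by apply: eq_bigr => k _; rewrite prod_coprime_const. Qed.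

Theorem lemma4p2 (p n : nat) (hp : prime p) (hn : 1 <= n) :
  logn p (farey_denom_prod n) =
  \sum_(1 <= b < (trunc_log p n).+1) \sum_(1 <= a < (n %/ p ^ b).+1) totient (a * p ^ b).
Proof.
set L := trunc_log p n.
rewrite farey_denom_prodE big_nat_cond logn_prod -?big_nat_cond; last first.
  by move=> k /andP[/andP[k_gt0 _] _]; rewrite expn_gt0 k_gt0.
transitivity (\sum_(1 <= k < n.+1) \sum_(1 <= b < L.+1)
                if p ^ b %| k then totient k else 0).
  apply: eq_big_nat => k /andP[k_gt0 lt_kn]; rewrite lognX.
  have lt_k_pL : k < p ^ L.+1 := leq_trans lt_kn (trunc_log_ltn n (prime_gt1 hp)).
  rewrite (logn_count_dvd_bounded _ _ _ hp k_gt0 lt_k_pL) big_distrr.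
  by apply: eq_bigr => b _; case: (p ^ b %| k); rewrite /= ?muln1 ?muln0.
rewrite exchange_big_nat; apply: eq_bigr => b _.
by rewrite -big_mkcond big_nat_dvd // expn_gt0 prime_gt0.
Qed.
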